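(* For every Gauss diagram $D$ consisting of $m>0$ signed dashed arrows (and no other arrows), there exist a fractional twist lattice $\Phi_D:\mathbb{Z}^m\to\mathscr{K}$, $\alpha\in(\mathbb{Z}_{\ge0})^m$ and $\nu\in\{+,-\}^m$ such that $I\big(\partial^{\nu\alpha}\Phi_D(\vec 0)\big)=(-1)^{\#(-)}\cdot D$, where $\#(-)$ is the number of arrows of $D$ signed $-$.
   Context: Gauss diagrams: a long virtual knot is encoded by the real line $\mathbb{R}$ with signed arrows, one for each classical crossing (arrow between the two preimages $x<y$, pointing right if the overcrossing is at $x$, left otherwise, labelled with the writhe sign); $\mathscr{D}$ is the set of such diagrams up to orientation-preserving homeomorphism of $\mathbb{R}$ and $\mathscr{K}$ the set of long virtual knots. A dashed arrow represents a semi-virtual crossing: a diagram with a dashed arrow equals the diagram with that arrow solid minus the diagram with that arrow deleted. $\mathscr{A}$ is the free abelian group generated by Gauss diagrams all of whose arrows are dashed, and $i$ makes every arrow dashed. $I:\mathbb{Z}[\mathscr{D}]\to\mathscr{A}$ is $I(D)=\sum_{D'\subset D} i(D')$, summing over all subdiagrams obtained by deleting a subset of arrows; it is an isomorphism and descends to $\mathbb{Z}[\mathscr{K}]\to\mathscr{P}$ ($\mathscr{P}$ the quotient of $\mathscr{A}$ by the Polyak relations); the equality is understood there. Discrete derivatives: for $\Phi:\mathbb{Z}^m\to\mathbb{Z}[\mathscr{K}]$, $(\partial_i^+\Phi)(z)=\Phi(z+e_i)-\Phi(z)$, $(\partial_i^-\Phi)(z)=\Phi(z)-\Phi(z-e_i)$;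 $\partial_i^{\pm a}$ is the $a$-fold iterate, $\partial^{\nu\alpha}=\partial_1^{\nu_1\alpha_1}\cdots\partial_m^{\nu_m\alpha_m}$. Fractional twist lattices: a proper pair is a pair of disjoint open intervals $A<A'$ of $\mathbb{R}$ such that every arrow with an endpoint in $A\cup A'$ has one endpoint in each. For $Y\in\{S,B\}$, $Z\in\{L,R\}$, a fractional twist sequence of type $FYZ$ with pair $(A,A')$ places at $k\in\mathbb{Z}$ exactly $|k|$ arrows with endpoints $a_1<\dots<a_{|k|}$ in $A$, $b_1<\dots<b_{|k|}$ in $A'$, arrow $i$ joining $a_i$ to $b_i$ ($Y=S$) or $b_{|k|+1-i}$ ($Y=B$), all pointing in direction $Z$ and signed $+$ if $k\ge0$, all pointing opposite to $Z$ and signed $-$ if $k<0$. A fractional twist lattice of dimension $m$ is $\Phi:\mathbb{Z}^m\to\mathscr{K}$ given by a fixed Gauss diagram $G$ and disjoint proper pairs $(A_i,A_i')$ free of endpoints of $G$, with $\Phi(k_1,\dots,k_m)$ equal to $G$ plus, in each $(A_i,A_i')$, the $k_i$-th configuration of a fractional twist sequence of some type $FYZ$. *)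

From HB Require Import structures.
From mathcomp Require Import all_boot all_order all_algebra.
From mathcomp Require Import boolp.
Set Implicit Arguments. Unset Strict Implicit. Unset Printing Implicit Defensive.
Import Order.TTheory GRing.Theory Num.Theory.
Local Open Scope ring_scope.

(* Endpoints are placed at rational points of R (every finite         *)
(* configuration is homeomorphic to a rational one).                  *)
(* An arrow is (tail, head, sign); the tail is the overcrossing       *)
(* preimage, the head the undercrossing one (so the arrow points       *)
(* right iff tail < head).  sign = true means +, false means -.      *)
Definition arrow := (rat * rat * bool)%type.
Definition tl (a : arrow) : rat := a.1.1.
Definition hd (a : arrow) : rat := a.1.2.
Definition sgn (a : arrow) : bool := a.2.

Definition diagram := seq arrow.

Definition endpoints (D : diagram) : seq rat :=
  flatten [seq [:: tl a; hd a] | a <- D].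

Definition wf_diagram (D : diagram) : bool := uniq (endpoints D).

Definition amap (f : rat -> rat) (a : arrow) : arrow := (f (tl a), f (hd a), sgn a).

(* equality in the set of Gauss diagrams: up to orientation-preserving
   homeomorphism of R (= an order-preserving map on the endpoints) *)
Definition gd_iso (D1 D2 : diagram) : Prop :=
  exists f : rat -> rat,
    {in endpoints D1 &, forall x y, x < y -> f x < f y} /\
    perm_eq (map (amap f) D1) D2.

(* Formal integer combinations of diagrams.  The same type represents *)
(* Z[D] (solid arrows) and A (all arrows dashed; i is the identity on *)
(* representations).  Two combinations are equal iff they have the   *)
(* same coefficient on every diagram class.                           *)
Definition comb := seq (int * diagram).

Definition coef (X : comb) (D : diagram) : int :=
  \sum_(p <- X | `[< gd_iso p.2 D >]) p.1.

Definition comb_eq (X Y : comb) : Prop := forall D, coef X D = coef Y D.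

Definition comb_opp (X : comb) : comb := [seq (- p.1, p.2) | p <- X].
Definition comb_scale (c : int) (X : comb) : comb := [seq (c * p.1, p.2) | p <- X].

Fixpoint subdiagrams (D : diagram) : seq diagram :=
  match D with
  | [::] => [:: [::]]
  | a :: D' => let Ss := subdiagrams D' in Ss ++ map (cons a) Ss
  end.

(* I : Z[D] -> A,  I(D) = sum_{D' subset D} i(D') *)
Definition Imap (X : comb) : comb :=
  flatten [seq [seq (p.1, E) | E <- subdiagrams p.2] | p <- X].

Definition between (x y z : rat) : bool := (Num.min x z < y) && (y < Num.max x z).

Definition adjacent (D : diagram) (x z : rat) : bool :=
  all (fun y => ~~ between x y z) (endpoints D).

Definition R1move (D1 D2 : diagram) : Prop :=
  exists a : arrow, D2 = a :: D1 /\ wf_diagram D2 /\ adjacent D1 (tl a) (hd a).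

Definition R2move (D1 D2 : diagram) : Prop :=
  exists a b : arrow, D2 = a :: b :: D1 /\ wf_diagram D2 /\ sgn a != sgn b /\
    adjacent D2 (tl a) (tl b) /\ adjacent D2 (hd a) (hd b).

(* Omega3: arrows x : T->M, y : T->B, z : M->B (top, middle, bottom strands),
   the two endpoints on each strand adjacent; the configuration must be a
   planar triangle, and the move reverses the order on each strand. *)
Definition R3move (D1 D2 : diagram) : Prop :=
  exists (x y z : arrow) (D0 : diagram),
    D1 = [:: x; y; z] ++ D0 /\ wf_diagram D1 /\
    adjacent D1 (tl x) (tl y) /\ adjacent D1 (hd x) (tl z) /\
    adjacent D1 (hd y) (hd z) /\
    ((tl x < tl y) == (hd x < tl z)) = (sgn y == sgn z) /\
    ((tl x < tl y) == (hd y < hd z)) = (sgn x == sgn z) /\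
    D2 = [:: (tl y, tl z, sgn x); (tl x, hd z, sgn y); (hd x, hd y, sgn z)] ++ D0.

Definition reid_move (D1 D2 : diagram) : Prop :=
  [/\ wf_diagram D1 & R1move D1 D2 \/ R2move D1 D2 \/ R3move D1 D2].

(* Equality in P = A / (Polyak relations), where the Polyak relations are
   the subgroup I(span{D1 - D2 : D1, D2 related by a Reidemeister move}). *)
Definition P_eq (X Y : comb) : Prop :=
  exists rels : seq (int * (diagram * diagram)),
    (forall r, r \in rels -> reid_move r.2.1 r.2.2) /\
    comb_eq (X ++ comb_opp Y)
      (flatten [seq comb_scale r.1 (Imap [:: (1, r.2.1)] ++ comb_opp (Imap [:: (1, r.2.2)]))
               | r <- rels]).

Definition shift (m : nat) (z : 'I_m -> int) (i : 'I_m) (d : int) : 'I_m -> int :=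
  fun j => if j == i then z j + d else z j.

Definition dplus (m : nat) (i : 'I_m) (Phi : ('I_m -> int) -> comb) : ('I_m -> int) -> comb :=
  fun z => Phi (shift z i 1) ++ comb_opp (Phi z).

Definition dminus (m : nat) (i : 'I_m) (Phi : ('I_m -> int) -> comb) : ('I_m -> int) -> comb :=
  fun z => Phi z ++ comb_opp (Phi (shift z i (-1))).

(* nu i = true means +, false means - ;  d^{nu alpha} *)
Definition dpow (m : nat) (nu : 'I_m -> bool) (alpha : 'I_m -> nat)
    (Phi : ('I_m -> int) -> comb) : ('I_m -> int) -> comb :=
  foldr (fun i F => iter (alpha i) (if nu i then dplus i else dminus i) F) Phi (enum 'I_m).

(* A pair of intervals (A, A') is encoded as (a1, a2, b1, b2) with    *)
(* A = (a1, a2), A' = (b1, b2).                                       *)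
(* Y = true : type S, Y = false : type B.                             *)
(* Z = true : type R, Z = false : type L.                             *)
Definition ipair := (rat * rat * rat * rat)%type.

Definition twist_arrows (A : ipair) (Y Z : bool) (k : int) : diagram :=
  let n := `|k|%N in
  let a1 := A.1.1.1 in let a2 := A.1.1.2 in
  let b1 := A.1.2 in let b2 := A.2 in
  let pos (lo hi : rat) (j : nat) := lo + j%:R * (hi - lo) / (n.+1)%:R in
  [seq let aj := pos a1 a2 j in
       let bj := pos b1 b2 (if Y then j else (n.+1 - j)%N) in
       if Z == (0 <= k) then (aj, bj, 0 <= k) else (bj, aj, 0 <= k)
  | j <- iota 1 n].

Definition ftl (m : nat) (G : diagram) (A : 'I_m -> ipair) (Y Z : 'I_m -> bool)
    (k : 'I_m -> int) : diagram :=
  G ++ flatten [seq twist_arrows (A i) (Y i) (Z i) (k i) | i <- enum 'I_m].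

Definition in_open (lo hi x : rat) : bool := (lo < x) && (x < hi).

Definition disj_open (l1 h1 l2 h2 : rat) : bool := (h1 <= l2) || (h2 <= l1).

Definition ftl_data (m : nat) (G : diagram) (A : 'I_m -> ipair) : Prop :=
  [/\ wf_diagram G,
      (forall i, let: (a1, a2, b1, b2) := A i in [&& a1 < a2, a2 <= b1 & b1 < b2]),
      (forall i j, i != j ->
         let: (a1, a2, b1, b2) := A i in let: (c1, c2, d1, d2) := A j in
         [&& disj_open a1 a2 c1 c2, disj_open a1 a2 d1 d2,
             disj_open b1 b2 c1 c2 & disj_open b1 b2 d1 d2]) &
      (forall i x, x \in endpoints G ->
         let: (a1, a2, b1, b2) := A i in ~~ in_open a1 a2 x && ~~ in_open b1 b2 x)].

Definition is_ftl (m : nat) (Phi : ('I_m -> int) -> diagram) : Prop :=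
  exists (G : diagram) (A : 'I_m -> ipair) (Y Z : 'I_m -> bool),
    ftl_data G A /\ forall k, Phi k = ftl G A Y Z k.

Definition num_neg (D : diagram) : nat := count (fun a => ~~ sgn a) D.

From HB Require Import structures.
From mathcomp Require Import all_boot all_order all_algebra.
From mathcomp Require Import boolp.
From mathcomp Require Import zify ring lra.
Set Implicit Arguments. Unset Strict Implicit. Unset Printing Implicit Defensive.
Import Order.TTheory GRing.Theory Num.Theory.
Local Open Scope ring_scope.

(* Put a small interval around each endpoint of D.  In the pair of intervals
   of the i-th arrow, a fractional twist sequence of type FSZ places at
   k = +-1 a single arrow joining the two midpoints, which is exactly the
   i-th arrow of D once Z is chosen from its direction and sign.  So for
   z_i in {0, sign_i} the lattice Phi_D(z) is the subdiagram of D made of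
   the arrows with z_i <> 0.  One forward (resp. backward) difference in
   each direction of positive (resp. negative) sign yields the alternating
   sum over all subdiagrams, and after applying I, which sends a diagram to
   the sum of its subdiagrams, everything but +-D cancels by
   inclusion-exclusion.  The identity already holds in A: no Polyak
   relation is used. *)

Definition comb_eval (W : diagram -> int) (X : comb) : int :=
  \sum_(p <- X) p.1 * W p.2.

Definition Iadj (W : diagram -> int) (d : diagram) : int :=
  \sum_(d' <- subdiagrams d) W d'.

Definition iso_weight (E : diagram) (d : diagram) : int :=
  if `[< gd_iso d E >] then 1 else 0.

Lemma comb_eval_cat W X Y : comb_eval W (X ++ Y) = comb_eval W X + comb_eval W Y.
Proof. by rewrite /comb_eval big_cat. Qed.

Lemma comb_eval_opp W X : comb_eval W (comb_opp X) = - comb_eval W X.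
Proof. by rewrite /comb_eval big_map -sumrN; apply: eq_bigr => p _; rewrite mulNr. Qed.

Lemma comb_eval_Imap W X : comb_eval W (Imap X) = comb_eval (Iadj W) X.
Proof.
elim: X => [|p X IH]; first by rewrite /comb_eval /Imap !big_nil.
by rewrite /Imap /= -/(Imap X) comb_eval_cat IH /comb_eval big_cons big_map mulr_sumr.
Qed.

Lemma coef_comb_eval X E : coef X E = comb_eval (iso_weight E) X.
Proof.
rewrite /coef /comb_eval big_mkcond; apply: eq_bigr => p _ /=; rewrite /iso_weight.
by case: ifP; rewrite ?mulr1 ?mulr0.
Qed.

Lemma P_eq_comb_eval X Y :
  (forall W, comb_eval W X = comb_eval W Y) -> P_eq X Y.
Proof.
move=> XY; exists [::]; split=> // E.
by rewrite /= {2}/coef big_nil coef_comb_eval comb_eval_cat comb_eval_opp XY subrr.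
Qed.

Lemma big_subdiagrams_cat (w : diagram -> int) X Y :
  \sum_(d <- subdiagrams (X ++ Y)) w d =
  \sum_(d1 <- subdiagrams X) \sum_(d2 <- subdiagrams Y) w (d1 ++ d2).
Proof.
elim: X w => [|a X IH] w /=; first by rewrite big_seq1.
by rewrite !big_cat /= !big_map IH (IH (fun d => w (a :: d))).
Qed.

Definition a0 : arrow := (0, 0, true).

Definition arrow_end (a : arrow) (b : bool) : rat := if b then hd a else tl a.

Lemma size_endpoints D : size (endpoints D) = (size D).*2.
Proof. by elim: D => //= a D IH; rewrite -/(endpoints D) IH doubleS. Qed.

Lemma nth_endpoints D i (b : bool) : (i < size D)%N ->
  nth 0 (endpoints D) (i.*2 + b) = arrow_end (nth a0 D i) b.
Proof.
elim: D i => // a D IH [|i] /= ltiD; first by clear IH; case: b.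
by rewrite -/(endpoints D) -IH.
Qed.

Lemma arrow_end_mem D i (b : bool) : (i < size D)%N -> arrow_end (nth a0 D i) b \in endpoints D.
Proof.
by move=> ltiD; rewrite -nth_endpoints // mem_nth // size_endpoints; case: b => /=; lia.
Qed.

Lemma arrow_end_neq D i j (bi bj : bool) : wf_diagram D -> (i < size D)%N -> (j < size D)%N ->
  (i != j) || (bi != bj) -> arrow_end (nth a0 D i) bi != arrow_end (nth a0 D j) bj.
Proof.
move=> wfD ltiD ltjD; rewrite -!nth_endpoints // nth_uniq ?size_endpoints //.
- by case: bi; case: bj => /=; lia.
- by case: bi => /=; lia.
- by case: bj => /=; lia.
Qed.

Definition sep_radius (D : diagram) : rat :=
  foldr Num.min 1 [seq g <- [seq `|x - y| | x <- endpoints D, y <- endpoints D] | 0 < g] / 4.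

Lemma foldr_min_gt0 (s : seq rat) : all (fun g => 0 < g) s -> 0 < foldr Num.min 1 s.
Proof. by elim: s => //= x s IH /andP[x_gt0 /IH]; rewrite lt_min x_gt0. Qed.

Lemma foldr_min_le (s : seq rat) x : x \in s -> foldr Num.min 1 s <= x.
Proof.
elim: s => //= y s IH; rewrite in_cons ge_min => /orP[/eqP->|/IH->]; last exact: orbT.
by rewrite lexx.
Qed.

Lemma sep_radius_gt0 D : 0 < sep_radius D.
Proof. by rewrite /sep_radius divr_gt0 // foldr_min_gt0 // filter_all. Qed.

Lemma sep_radius_le D x y : x \in endpoints D -> y \in endpoints D -> x != y ->
  4 * sep_radius D <= `|x - y|.
Proof.
move=> xD yD neq_xy; rewrite /sep_radius mulrC divfK //; apply: foldr_min_le.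
by rewrite mem_filter normr_gt0 subr_eq0 neq_xy (allpairs_f (fun x y => `|x - y|) xD yD).
Qed.

Lemma disj_open_sep D x y : x \in endpoints D -> y \in endpoints D -> x != y ->
  disj_open (x - sep_radius D) (x + sep_radius D) (y - sep_radius D) (y + sep_radius D).
Proof.
move=> xD yD neq_xy; have := sep_radius_le xD yD neq_xy; have := sep_radius_gt0 D.
by rewrite ler_normr /disj_open => e_gt0 /orP[] ?; apply/orP; [right|left]; lra.
Qed.

Lemma lt_sep D x y : x \in endpoints D -> y \in endpoints D -> x < y ->
  x + sep_radius D <= y - sep_radius D.
Proof.
move=> xD yD lt_xy; have := sep_radius_le xD yD (negbT (lt_eqF lt_xy)); have := sep_radius_gt0 D.
by rewrite ler_normr => e_gt0 /orP[] ?; lra.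
Qed.

Definition points_right (a : arrow) : bool := tl a < hd a.

Definition sign_int (a : arrow) : int := if sgn a then 1 else -1.

Definition twist_pair (e : rat) (a : arrow) : ipair :=
  let l := arrow_end a (~~ points_right a) in
  let r := arrow_end a (points_right a) in
  (l - e, l + e, r - e, r + e).

Lemma midpoint_ball (x e : rat) : x - e + 1%:R * (x + e - (x - e)) / 2%:R = x.
Proof. by field. Qed.

Lemma twist_arrows_sign e a :
  twist_arrows (twist_pair e a) true (points_right a == sgn a) (sign_int a) = [:: a].
Proof.
case: a => [[t h] s]; rewrite /twist_arrows /twist_pair /sign_int /points_right /=.
have -> : absz (if s then 1 else -1 : int) = 1%N by case: s.
by rewrite /= !midpoint_ball; case: s; case: (t < h).
Qed.

Lemma ftl_data_twist_pairs m D : wf_diagram D -> size D = m ->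
  ftl_data [::] (fun i : 'I_m => twist_pair (sep_radius D) (nth a0 D i)).
Proof.
move=> wfD sizeD; split=> // [i|i j neq_ij].
  have ltiD : (i < size D)%N by rewrite sizeD.
  have lt_ends : arrow_end (nth a0 D i) (~~ points_right (nth a0 D i))
               < arrow_end (nth a0 D i) (points_right (nth a0 D i)).
    have := arrow_end_neq (bi := false) (bj := true) wfD ltiD ltiD (orbT _).
    rewrite /arrow_end /points_right.
    by case: (ltgtP (tl (nth a0 D i)) (hd (nth a0 D i))) => //= ->; rewrite eqxx.
  have := lt_sep (arrow_end_mem _ ltiD) (arrow_end_mem _ ltiD) lt_ends.
  by have := sep_radius_gt0 D; rewrite /twist_pair /= => ? ?; apply/and3P; split; lra.
have ltiD : (i < size D)%N by rewrite sizeD.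
have ltjD : (j < size D)%N by rewrite sizeD.
by rewrite /twist_pair /= !disj_open_sep ?arrow_end_mem ?arrow_end_neq ?(neq_ij : (i : nat) != j).
Qed.

Lemma drop_enum_ord m (j : 'I_m) : drop j (enum 'I_m) = j :: drop j.+1 (enum 'I_m).
Proof. by rewrite (drop_nth j) ?size_enum_ord // nth_ord_enum. Qed.

Lemma mem_drop_enum_ord m k (i : 'I_m) : (i \in drop k (enum 'I_m)) = (k <= i)%N.
Proof.
rewrite -(mem_map val_inj) map_drop val_enum_ord drop_iota add0n mem_iota.
by have := ltn_ord i; case: leqP => /=; lia.
Qed.

Lemma mem_take_enum_ord m k (i : 'I_m) : (i \in take k (enum 'I_m)) = (i < k)%N.
Proof.
rewrite -(mem_map val_inj) map_take val_enum_ord take_iota mem_iota /=.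
by have := ltn_ord i; lia.
Qed.

Lemma flatten_map_if (T S : Type) (g : T -> seq S) (f : T -> S) (P : pred T) (s : seq T) :
  (forall x, g x = if P x then [:: f x] else [::]) ->
  flatten (map g s) = [seq f x | x <- s & P x].
Proof. by move=> gE; elim: s => //= x s ->; rewrite gE; case: (P x). Qed.

Section TwistLattice.

Variables (m : nat) (D : diagram).
Hypothesis sizeD : size D = m.

Definition unit_config (z : 'I_m -> int) : Prop :=
  forall i : 'I_m, z i = 0 \/ z i = sign_int (nth a0 D i).

Definition support_diagram (z : 'I_m -> int) : diagram :=
  [seq nth a0 D i | i : 'I_m <- enum 'I_m & z i != 0].

Definition twist_lattice : ('I_m -> int) -> diagram :=
  ftl [::] (fun i => twist_pair (sep_radius D) (nth a0 D i)) (fun _ => true)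
      (fun i => points_right (nth a0 D i) == sgn (nth a0 D i)).

Lemma is_ftl_twist_lattice : wf_diagram D -> is_ftl twist_lattice.
Proof.
move=> wfD; exists [::], (fun i => twist_pair (sep_radius D) (nth a0 D i)), (fun _ => true).
exists (fun i => points_right (nth a0 D i) == sgn (nth a0 D i)).
by split; [exact: ftl_data_twist_pairs | move=> k; rewrite /twist_lattice].
Qed.

Lemma twist_lattice_unit z : unit_config z -> twist_lattice z = support_diagram z.
Proof.
move=> zunit; rewrite /twist_lattice /ftl cat0s; apply: flatten_map_if => i.
by case: (zunit i) => ->; rewrite ?twist_arrows_sign // /sign_int; case: (sgn _).
Qed.

Lemma support_diagram_shift (j : 'I_m) z c : c != 0 ->
  (forall i : 'I_m, (j <= i)%N -> z i = 0) ->
  support_diagram (shift z j c) = rcons (support_diagram z) (nth a0 D j).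
Proof.
move=> c_neq0 z_eq0.
rewrite /support_diagram -(cat_take_drop j (enum 'I_m)) drop_enum_ord.
have shift_j : shift z j c j = c by rewrite /shift eqxx z_eq0 // add0r.
rewrite !filter_cat !map_cat /= shift_j c_neq0 z_eq0 // eqxx.
have drop_pred0 z' : (forall i : 'I_m, (j < i)%N -> z' i = 0) ->
    [seq i <- drop j.+1 (enum 'I_m) | z' i != 0] = [::].
  move=> z'_eq0; rewrite -(filter_pred0 (drop j.+1 (enum 'I_m))).
  by apply: eq_in_filter => i; rewrite mem_drop_enum_ord => /z'_eq0 ->; rewrite eqxx.
rewrite !drop_pred0 => [|i lt_ji|i lt_ji]; last 2 first.
- by apply: z_eq0; apply: ltnW.
- by rewrite /shift -val_eqE /= gtn_eqF // z_eq0 // ltnW.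
rewrite cats0 -cats1; congr (map _ _ ++ _); apply: eq_in_filter => i.
by rewrite mem_take_enum_ord /shift -val_eqE => /ltn_eqF ->.
Qed.

Definition cube_deriv (l : seq 'I_m) : ('I_m -> int) -> comb :=
  foldr (fun (i : 'I_m) F => iter 1 (if sgn (nth a0 D i) then dplus i else dminus i) F)
        (fun k => [:: (1, twist_lattice k)]) l.

Definition cube_deriv_spec (W : diagram -> int) (j : nat) : Prop :=
  forall z, unit_config z -> (forall i : 'I_m, (j <= i)%N -> z i = 0) ->
  comb_eval (Iadj W) (cube_deriv (drop j (enum 'I_m)) z) =
  (-1) ^+ num_neg (drop j D) * \sum_(d <- subdiagrams (twist_lattice z)) W (d ++ drop j D).

Lemma cube_deriv_spec_m W : cube_deriv_spec W m.
Proof.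
move=> z _ _; rewrite !drop_oversize ?size_enum_ord ?sizeD //= mul1r.
by rewrite /comb_eval big_seq1 mul1r; apply: eq_bigr => d _; rewrite cats0.
Qed.

Lemma cube_deriv_spec_pred W (j : 'I_m) : cube_deriv_spec W j.+1 -> cube_deriv_spec W j.
Proof.
move=> IH z zunit z_eq0; set a := nth a0 D j; set z' := shift z j (sign_int a).
have z_eq0S (i : 'I_m) : (j < i)%N -> z i = 0 by move/ltnW; apply: z_eq0.
have z'unit : unit_config z'.
  move=> i; rewrite /z' /shift; case: eqP => [->|_]; last exact: zunit.
  by right; rewrite z_eq0 // add0r.
have z'_eq0S (i : 'I_m) : (j < i)%N -> z' i = 0.
  by move=> lt_ji; rewrite /z' /shift -val_eqE /= gtn_eqF // z_eq0S.
have sum_z' : \sum_(d <- subdiagrams (twist_lattice z')) W (d ++ drop j.+1 D) =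
              \sum_(d <- subdiagrams (twist_lattice z)) W (d ++ drop j.+1 D) +
              \sum_(d <- subdiagrams (twist_lattice z)) W (d ++ a :: drop j.+1 D).
  rewrite !twist_lattice_unit // support_diagram_shift //; last by rewrite /sign_int; case: (sgn a).
  rewrite -cats1 big_subdiagrams_cat -big_split; apply: eq_bigr => d _.
  by rewrite big_cons big_seq1 cats0 -catA.
have := IH z zunit z_eq0S; have := IH z' z'unit z'_eq0S.
rewrite drop_enum_ord [drop j D](drop_nth a0) ?sizeD //= -/a sum_z' => Fz' Fz.
case sgn_a: (sgn a); rewrite /dplus /dminus comb_eval_cat comb_eval_opp.
- by rewrite [shift z j 1](_ : _ = z') ?Fz' ?Fz; [ring | rewrite /z' /sign_int sgn_a].
- by rewrite [shift z j (-1)](_ : _ = z') ?Fz' ?Fz ?exprS; [ring | rewrite /z' /sign_int sgn_a].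
Qed.

Lemma cube_deriv_spec0 W : cube_deriv_spec W 0.
Proof.
suff spec_sub n : (n <= m)%N -> cube_deriv_spec W (m - n) by rewrite -(subnn m); apply: spec_sub.
elim: n => [_|n IH lt_nm]; first by rewrite subn0; apply: cube_deriv_spec_m.
have lt_j : (m - n.+1 < m)%N by lia.
apply: (cube_deriv_spec_pred (j := Ordinal lt_j)); rewrite /= subnSK //; exact: IH (ltnW _).
Qed.

Lemma comb_eval_Imap_dpow W :
  comb_eval W (Imap (dpow (fun i => sgn (nth a0 D i)) (fun _ => 1%N)
                          (fun k => [:: (1, twist_lattice k)]) (fun _ => 0))) =
  (-1) ^+ num_neg D * W D.
Proof.
have unit0 : unit_config (fun _ => 0) by left.
rewrite comb_eval_Imap.
change (comb_eval (Iadj W) (cube_deriv (enum 'I_m) (fun _ => 0)) = (-1) ^+ num_neg D * W D).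
rewrite -[enum _]drop0 (cube_deriv_spec0 W unit0) // twist_lattice_unit //.
by rewrite /support_diagram (eq_filter (a2 := pred0)) ?filter_pred0 ?drop0 //= big_seq1.
Qed.

End TwistLattice.

Theorem lemma6 (m : nat) (D : diagram) :
  (0 < m)%N -> wf_diagram D -> size D = m ->
  exists (Phi : ('I_m -> int) -> diagram) (alpha : 'I_m -> nat) (nu : 'I_m -> bool),
    is_ftl Phi /\
    P_eq (Imap (dpow nu alpha (fun k => [:: (1, Phi k)]) (fun _ => 0)))
         [:: ((-1) ^+ num_neg D, D)].
Proof.
move=> _ wfD sizeD.
exists (twist_lattice D), (fun _ => 1%N), (fun i => sgn (nth a0 D i)).
split; first exact: is_ftl_twist_lattice.
apply: P_eq_comb_eval => W.
by rewrite (comb_eval_Imap_dpow sizeD) /comb_eval big_seq1.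
Qed.
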